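(* Let $\hat\Omega\subset\mathbb{R}^{N_D}$ be a reference element, let $P$ be a finite-dimensional space of real polynomials on $\hat\Omega$, and let $V$ be a finite-dimensional space of polynomial vector fields $\hat\Omega\to\mathbb{R}^{N_D}$ with $P^{N_D}\subseteq V$. Let $\{\hat x_\rho\}$ be solution points unisolvent for $P$ with Lagrange basis $\{l_\rho\}\subset P$, $l_\rho(\hat x_\sigma)=\delta_{\rho\sigma}$. Let $\{(\hat x_\nu,\hat n_\nu)\}$ be flux points with associated unit directions, split into external points $\nu\in E$ (on $\partial\hat\Omega$, with $\hat n_\nu$ the outward unit normal) and internal points $\nu\in I$, such that there is a basis $\{\boldsymbol\phi_\nu\}$ of $V$ with $\boldsymbol\phi_\rho(\hat x_\sigma)\cdot\hat n_\sigma=\delta_{\rho\sigma}$. Let $\{\mathbf g_\nu\}_{\nu\in E}$ be vector correction functions satisfying $\hat\nabla\cdot\mathbf g_\nu(\hat x_\sigma)=\hat\nabla\cdot\boldsymbol\phi_\nu(\hat x_\sigma)$ for every solution point $\hat x_\sigma$ and every $\nu\in E$. Let $u\in P$, let $\mathbf c\in\mathbb{R}^{N_D}$ be a constant vector, let $\mathbf f=\mathbf c\,u$ (a linear flux with constant coefficients), and let $\{F_\nu\}_{\nu\in E}$ be arbitrary real numbers (common normal fluxes). Define, at each solution point $\hat x_\sigma$, $$R^{\mathrm{SDRT}}_\sigma=\sum_{\nu\in I}\big(\mathbf f(\hat x_\nu)\cdot\hat n_\nu\big)\,\hat\nabla\cdot\boldsymbol\phi_\nu(\hat x_\sigma)+\sum_{\nu\in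 E}F_\nu\,\hat\nabla\cdot\boldsymbol\phi_\nu(\hat x_\sigma),$$ $$R^{\mathrm{FR}}_\sigma=\sum_\rho \mathbf f(\hat x_\rho)\cdot\hat\nabla l_\rho(\hat x_\sigma)+\sum_{\nu\in E}\Big(F_\nu-\Big[\sum_\rho \mathbf f(\hat x_\rho)\,l_\rho(\hat x_\nu)\Big]\cdot\hat n_\nu\Big)\hat\nabla\cdot\mathbf g_\nu(\hat x_\sigma).$$ Then $R^{\mathrm{SDRT}}_\sigma=R^{\mathrm{FR}}_\sigma$ for every solution point $\hat x_\sigma$. *)

From HB Require Import structures.
From mathcomp Require Import all_boot all_order all_algebra.
From mathcomp Require Export mpoly.
Set Implicit Arguments. Unset Strict Implicit. Unset Printing Implicit Defensive.
Import Order.TTheory GRing.Theory Num.Theory.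
Local Open Scope ring_scope.

Definition vfield (R : ringType) (n : nat) := {ffun 'I_n -> {mpoly R[n]}}.

Definition is_subspace (R : ringType) (M : lmodType R) (S : {pred M}) : Prop :=
  0 \in S /\ forall (a : R) (x y : M), x \in S -> y \in S -> a *: x + y \in S.

Definition findim (R : ringType) (M : lmodType R) (S : {pred M}) : Prop :=
  exists (k : nat) (b : 'I_k -> M),
    forall x, x \in S <-> exists c : 'I_k -> R, x = \sum_(i < k) c i *: b i.

Definition is_basis (R : ringType) (M : lmodType R) (S : {pred M}) (k : nat)
    (b : 'I_k -> M) : Prop :=
  [/\ forall i, b i \in S,
      forall x, x \in S -> exists c : 'I_k -> R, x = \sum_(i < k) c i *: b i
    & forall c : 'I_k -> R, \sum_(i < k) c i *: b i = 0 -> forall i, c i = 0].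

Definition unisolvent (R : ringType) (n N : nat) (P : {pred {mpoly R[n]}})
    (xs : 'I_N -> 'I_n -> R) : Prop :=
  forall d : 'I_N -> R, exists! p : {mpoly R[n]},
    p \in P /\ forall s, p.@[xs s] = d s.

Definition vdot (R : ringType) (n : nat) (a b : 'I_n -> R) : R :=
  \sum_(i < n) a i * b i.

Definition veval (R : comRingType) (n : nat) (phi : vfield R n) (x : 'I_n -> R)
  : 'I_n -> R := fun i => (phi i).@[x].

Definition vdiv (R : ringType) (n : nat) (phi : vfield R n) : {mpoly R[n]} :=
  \sum_(i < n) mderiv i (phi i).

Definition pgrad (R : comRingType) (n : nat) (p : {mpoly R[n]}) (x : 'I_n -> R)
  : 'I_n -> R := fun i => (mderiv i p).@[x].

Definition linflux (R : comRingType) (n : nat) (c : 'I_n -> R) (u : {mpoly R[n]})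
    (x : 'I_n -> R) : 'I_n -> R := fun i => c i * u.@[x].

From HB Require Import structures.
From mathcomp Require Import all_boot all_order all_algebra.
From mathcomp Require Import mpoly.
Set Implicit Arguments. Unset Strict Implicit. Unset Printing Implicit Defensive.
Import Order.TTheory GRing.Theory Num.Theory.
Local Open Scope ring_scope.

(* Let q = c u, the flux as a polynomial vector field; it lies in V because
   each component c_i u lies in P and P^n is contained in V.
   1. Expanding q in the basis phi, the coefficient of phi_v is the normal
      flux q(x_v).n_v (the basis is dual to the normal-flux functionals), so
      div q = sum_v (f(x_v).n_v) div phi_v.
   2. Since u is in P, it equals its Lagrange interpolant sum_r u(x_r) l_r.
      Hence div q = sum_r f(x_r).grad l_r (the FR volume term), and the
      interpolated flux sum_r f(x_r) l_r(x_v) equals f(x_v) at every flux point.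
   3. With div g_v = div phi_v at solution points, the FR correction term
      becomes sum_{v in E} (F_v - f(x_v).n_v) div phi_v, and adding it to
      div q yields exactly the SD-RT residual. *)

Lemma subspace_sum (R : nzRingType) (M : lmodType R) (S : {pred M}) (N : nat)
    (a : 'I_N -> R) (p : 'I_N -> M) :
  is_subspace S -> (forall r, p r \in S) -> \sum_(r < N) a r *: p r \in S.
Proof.
move=> [S0 SD] Sp; elim/big_rec: _ => // r x _ Sx.
exact: SD.
Qed.

Lemma sum_delta (R : nzRingType) (N : nat) (a : 'I_N -> R) (t : 'I_N) :
  \sum_(r < N) a r * (r == t)%:R = a t.
Proof.
rewrite (bigD1 t) //= eqxx mulr1 big1 ?addr0 // => r /negbTE ->.
by rewrite mulr0.
Qed.

Lemma lagrange_interp (R : comNzRingType) (n N : nat) (P : {pred {mpoly R[n]}})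
    (xs : 'I_N -> 'I_n -> R) (l : 'I_N -> {mpoly R[n]}) (p : {mpoly R[n]}) :
  is_subspace P -> unisolvent P xs -> (forall r, l r \in P) ->
  (forall r s, (l r).@[xs s] = (r == s)%:R) ->
  p \in P -> p = \sum_(r < N) p.@[xs r] *: l r.
Proof.
move=> subP uniP lP lnodal pP.
have [w [_ w_uniq]] := uniP (fun r => p.@[xs r]).
have p_eq : p = w by apply/esym/w_uniq.
rewrite [LHS]p_eq; apply: w_uniq; split; first exact: subspace_sum.
move=> t; rewrite raddf_sum /=.
under eq_bigr do rewrite mevalZ lnodal.
by rewrite sum_delta.
Qed.

Lemma basis_coord_normal_flux (R : comNzRingType) (n Nf : nat) (V : {pred vfield R n})
    (xf nf : 'I_Nf -> 'I_n -> R) (phi : 'I_Nf -> vfield R n) (q : vfield R n) :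
  is_basis V phi ->
  (forall r s, vdot (veval (phi r) (xf s)) (nf s) = (r == s)%:R) ->
  q \in V -> q = \sum_(v < Nf) vdot (veval q (xf v)) (nf v) *: phi v.
Proof.
move=> [_ decomp _] dual qV; have [a ->] := decomp q qV.
apply: eq_bigr => v _; congr (_ *: _); apply/esym.
rewrite /vdot /veval.
under eq_bigr do rewrite sum_ffunE raddf_sum mulr_suml.
rewrite exchange_big /= -[RHS](sum_delta a v); apply: eq_bigr => r _.
rewrite -(dual r v) /vdot /veval mulr_sumr; apply: eq_bigr => i _.
by rewrite ffunE mevalZ mulrA.
Qed.

Lemma vdiv_sum_eval (R : comNzRingType) (n N : nat) (a : 'I_N -> R)
    (phi : 'I_N -> vfield R n) (x : 'I_n -> R) :
  (vdiv (\sum_(v < N) a v *: phi v)).@[x] = \sum_(v < N) a v * (vdiv (phi v)).@[x].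
Proof.
rewrite /vdiv.
under eq_bigr do rewrite sum_ffunE raddf_sum.
rewrite exchange_big raddf_sum; apply: eq_bigr => v _.
rewrite -mevalZ scaler_sumr; congr (_.@[x]); apply: eq_bigr => i _.
by rewrite ffunE; exact: mderivZ.
Qed.

Definition fluxfield (R : nzRingType) (n : nat) (c : 'I_n -> R) (u : {mpoly R[n]})
  : vfield R n := [ffun i => c i *: u].

Lemma normal_fluxfield (R : comNzRingType) (n : nat) (c : 'I_n -> R)
    (u : {mpoly R[n]}) (x w : 'I_n -> R) :
  vdot (veval (fluxfield c u) x) w = vdot (linflux c u x) w.
Proof. by apply: eq_bigr => i _; rewrite /veval /linflux ffunE mevalZ. Qed.

Lemma fluxfield_in (R : nzRingType) (n : nat) (P : {pred {mpoly R[n]}})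
    (V : {pred vfield R n}) (c : 'I_n -> R) (u : {mpoly R[n]}) :
  is_subspace P -> (forall q : vfield R n, (forall i, q i \in P) -> q \in V) ->
  u \in P -> fluxfield c u \in V.
Proof.
move=> [P0 PD] PnV uP; apply: PnV => i.
by rewrite /fluxfield ffunE -[_ *: u]addr0; apply: PD.
Qed.

Section LagrangeFlux.
Variables (R : comNzRingType) (n Ns : nat) (xs : 'I_Ns -> 'I_n -> R).
Variables (l : 'I_Ns -> {mpoly R[n]}) (c : 'I_n -> R) (u : {mpoly R[n]}).
Hypothesis u_interp : u = \sum_(r < Ns) u.@[xs r] *: l r.

Lemma vdiv_fluxfield_lagrange (x : 'I_n -> R) :
  (vdiv (fluxfield c u)).@[x]
    = \sum_(r < Ns) vdot (linflux c u (xs r)) (pgrad (l r) x).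
Proof.
rewrite /vdiv raddf_sum /= /vdot exchange_big /=; apply: eq_bigr => i _.
rewrite ffunE mderivZ mevalZ {1}u_interp (raddf_sum (mderiv i)) raddf_sum.
rewrite mulr_sumr; apply: eq_bigr => r _.
by rewrite /linflux /pgrad -mulrA -[in RHS]mevalZ -mderivZ.
Qed.

Lemma interpolated_flux (y w : 'I_n -> R) :
  vdot (fun i => \sum_(r < Ns) linflux c u (xs r) i * (l r).@[y]) w
    = vdot (linflux c u y) w.
Proof.
apply: eq_bigr => i _; congr (_ * _).
rewrite /linflux {2}u_interp raddf_sum mulr_sumr.
by apply: eq_bigr => r _; rewrite -mulrA -mevalZ.
Qed.

End LagrangeFlux.

Theorem mainTheorem1 (R : realFieldType) (n Ns Nf : nat)
    (P : {pred {mpoly R[n]}}) (V : {pred vfield R n})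
    (xs : 'I_Ns -> 'I_n -> R) (l : 'I_Ns -> {mpoly R[n]})
    (xf : 'I_Nf -> 'I_n -> R) (nf : 'I_Nf -> 'I_n -> R) (E : {set 'I_Nf})
    (phi g : 'I_Nf -> vfield R n)
    (u : {mpoly R[n]}) (c : 'I_n -> R) (F : 'I_Nf -> R) :
  is_subspace P -> findim P ->
  is_subspace V -> findim V ->
  (forall q : vfield R n, (forall i, q i \in P) -> q \in V) ->
  unisolvent P xs ->
  (forall r, l r \in P) ->
  (forall r s, (l r).@[xs s] = (r == s)%:R) ->
  (forall v, vdot (nf v) (nf v) = 1) ->
  is_basis V phi ->
  (forall r s, vdot (veval (phi r) (xf s)) (nf s) = (r == s)%:R) ->
  (forall v s, v \in E -> (vdiv (g v)).@[xs s] = (vdiv (phi v)).@[xs s]) ->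
  u \in P ->
  forall s : 'I_Ns,
    \sum_(v | v \notin E) vdot (linflux c u (xf v)) (nf v) * (vdiv (phi v)).@[xs s]
      + \sum_(v in E) F v * (vdiv (phi v)).@[xs s]
    = \sum_(r < Ns) vdot (linflux c u (xs r)) (pgrad (l r) (xs s))
      + \sum_(v in E)
          (F v - vdot (fun i => \sum_(r < Ns) linflux c u (xs r) i * (l r).@[xf v]) (nf v))
          * (vdiv (g v)).@[xs s].
Proof.
move=> subP _ subV _ PnV uniP lP lnodal _ phi_basis phi_dual g_div uP s.
have u_interp := lagrange_interp subP uniP lP lnodal uP.
have div_flux : (vdiv (fluxfield c u)).@[xs s]
    = \sum_(v < Nf) vdot (linflux c u (xf v)) (nf v) * (vdiv (phi v)).@[xs s].
  rewrite (basis_coord_normal_flux phi_basis phi_dual (fluxfield_in c subP PnV uP)).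
  by rewrite vdiv_sum_eval; under eq_bigr do rewrite normal_fluxfield.
rewrite -(vdiv_fluxfield_lagrange c u_interp) div_flux.
rewrite [X in _ = X + _](bigID (mem E)) /=.
under [X in _ = _ + X]eq_bigr => v vE.
  rewrite (interpolated_flux c u_interp) g_div // mulrBl; over.
rewrite sumrB [X in _ = X + _]addrC -addrA; congr (_ + _).
by rewrite addrC subrK.
Qed.
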